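(* Let $\mathcal{F}\subseteq[\omega]^{<\omega}$ be a compact hereditary family covering $\omega$ which is large. Then the unit vector sequence $(e_n)$ is weakly null in $X^{\mathcal{F}}$ (i.e. $f(e_n)\to0$ for every continuous linear functional $f$ on $X^\mathcal{F}$) but $\lVert e_n\rVert^{\mathcal{F}}=1$ for all $n$. Hence $X^{\mathcal{F}}$ does not have the Schur property. In particular $X^{\mathcal{S}}$ does not have the Schur property.
   Context: $\omega=\{1,2,3,\dots\}$; $[\omega]^{<\omega}$ and $[M]^n$ denote the finite subsets of $\omega$ and the $n$-element subsets of $M$. Subsets of $\omega$ are identified with elements of $2^\omega$; compact means compact in $2^\omega$; hereditary means closed under subsets. A family $\mathcal{F}$ is large if $\mathcal{F}\cap[M]^n\neq\emptyset$ for every infinite $M\subseteq\omega$ and every $n\in\omega$. A partition is a family $\mathcal{P}\subseteq\mathcal{P}(\omega)$ with $\emptyset\in\mathcal{P}$, $\bigcup\mathcal{P}=\omega$, elements pairwise disjoint; $\mathbb{P}_\mathcal{F}$ is the set of partitions contained in $\mathcal{F}$. $\lVert x\rVert^{\mathcal{F}}=\inf_{\mathcal{P}\in\mathbb{P}_\mathcal{F}}\sum_{F\in\mathcal{P}}\sup_{k\in F}|x(k)|$; $X^\mathcal{F}$ is the completion of $c_{00}$ under this quasi-norm. A (quasi-)Banach space has the Schur property if every weakly null sequence converges to $0$ in (quasi-)norm. $\mathcal{S}=\{A\subseteq\omega:|A|\le\min A\}$ is the Schreier family. *)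

From HB Require Import structures.
From mathcomp Require Import all_boot all_order all_algebra.
From mathcomp Require Import all_classical all_reals all_analysis.
Set Implicit Arguments. Unset Strict Implicit. Unset Printing Implicit Defensive.
Import Order.TTheory GRing.Theory Num.Theory.
Import numFieldNormedType.Exports.
Local Open Scope classical_set_scope.
Local Open Scope ring_scope.
Local Open Scope card_scope.

(* omega = {1,2,3,...} is represented inside nat; a subset of omega is an
   element of 2^nat = cantor_space (i.e. nat -> bool) whose bit 0 is false. *)
Definition subset_omega (A : cantor_space) : Prop := ~~ A 0%N.

Definition finite_family (F : set cantor_space) : Prop :=
  forall A, F A -> subset_omega A /\ finite_set [set k | A k].

Definition compact_family (F : set cantor_space) : Prop := compact F.

Definition hereditary (F : set cantor_space) : Prop :=
  forall A B : cantor_space, F A -> (forall k, B k -> A k) -> F B.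

Definition covers_omega (F : set cantor_space) : Prop :=
  (forall k, (0 < k)%N -> exists2 A, F A & A k) /\
  (forall A, F A -> subset_omega A).

Definition large (F : set cantor_space) : Prop :=
  forall M : set nat, ~ M 0%N -> infinite_set M ->
  forall n : nat, (0 < n)%N ->
  exists2 A, F A & [set k | A k] `<=` M /\ [set k | A k] #= `I_n.

Definition empty_set_pt : cantor_space := fun _ => false.

Definition is_partition (P : set cantor_space) : Prop :=
  [/\ P empty_set_pt,
      (forall A, P A -> subset_omega A),
      (forall k, (0 < k)%N -> exists2 A, P A & A k) &
      (forall A B, P A -> P B -> A <> B -> forall k, ~~ (A k && B k))].

Definition partitions_in (F : set cantor_space) : set (set cantor_space) :=
  [set P | is_partition P /\ P `<=` F].

(* sup_{k in A} |x k|, with the convention sup over the empty set = 0 *)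
Definition supabs (R : realType) (x : nat -> R) (A : cantor_space) : \bar R :=
  ereal_sup ([set (`|x k|)%:E | k in [set k | A k]] `|` [set 0%E]).

Definition qnorm (R : realType) (F : set cantor_space) (x : nat -> R) : \bar R :=
  ereal_inf [set (\esum_(A in P) supabs x A)%E | P in partitions_in F].

Definition c00 (R : realType) (x : nat -> R) : Prop :=
  x 0%N = 0 /\ finite_set [set k | x k != 0].

Definition unitv (R : realType) (n : nat) : nat -> R :=
  fun k => if k == n then 1 else 0.

(* continuous linear functionals on X^F, viewed (by density of c_00 in the
   completion) as linear functionals on c_00 continuous for the quasi-norm *)
Definition cont_lin_functional (R : realType) (F : set cantor_space)
    (f : (nat -> R) -> R) : Prop :=
  (forall (a : R) x y, c00 x -> c00 y -> f (a *: x + y) = a * f x + f y) /\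
  (forall x, c00 x -> forall e : R, 0 < e -> exists2 d : R, 0 < d &
     forall y, c00 y -> (qnorm F (y - x)%R < d%:E)%E -> `|f y - f x| < e).

Definition weakly_null (R : realType) (F : set cantor_space)
    (x : nat -> nat -> R) : Prop :=
  forall f, cont_lin_functional F f -> (fun n => f (x n)) @ \oo --> (0 : R).

Definition norm_null (R : realType) (F : set cantor_space)
    (x : nat -> nat -> R) : Prop :=
  forall e : R, 0 < e -> \forall n \near \oo, (qnorm F (x n) < e%:E)%E.

Definition not_schur (R : realType) (F : set cantor_space) : Prop :=
  exists2 x : nat -> nat -> R, (forall n, c00 (x n)) &
    weakly_null F x /\ ~ norm_null F x.

(* Schreier family S = {A subset of omega : |A| <= min A} *)
Definition schreier : set cantor_space :=
  [set A | A = empty_set_pt \/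
     exists m, [/\ A m, (forall k, A k -> (m <= k)%N) & [set k | A k] #<= `I_m]].

From HB Require Import structures.
From mathcomp Require Import all_boot all_order all_algebra finmap.
From mathcomp Require Import all_classical all_reals all_analysis.
Import Order.TTheory GRing.Theory Num.Theory.
Import numFieldNormedType.Exports.

Set Implicit Arguments.
Unset Strict Implicit.
Unset Printing Implicit Defensive.
Local Open Scope classical_set_scope.
Local Open Scope ring_scope.

(* Every partition of omega has a block containing n, so ||e_n|| >= 1, and the
   partition {A} + singletons shows ||x|| <= sup |x| for x supported on A in F;
   hence ||e_n|| = 1.  If a continuous linear f had |f(e_k)| >= e for
   infinitely many k, largeness would give A in F of arbitrary size N inside
   this set; the signed sum y = c * sum_{k in A} sg(f e_k) e_k has ||y|| <= c
   while f y >= c N e, contradicting continuity at 0.  The Schreier family is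
   large because any n elements of M that are >= n form a Schreier set. *)

Definition singleton_pt (k : nat) : cantor_space := fun j => j == k.

Lemma esum_ge_term (R : realType) (T : choiceType) (P : set T)
    (a : T -> \bar R) t :
  P t -> (a t <= \esum_(i in P) a i)%E.
Proof.
move=> Pt; apply: esum_ge; exists [set t]; last by rewrite fsbig_set1.
by split=> [|_ ->]; first exact: finite_set1.
Qed.

Lemma esum_eq_term (R : realType) (T : choiceType) (P : set T)
    (a : T -> \bar R) t :
  P t -> (forall i, P i -> (0 <= a i)%E) ->
  (forall i, P i -> i <> t -> a i = 0%E) ->
  \esum_(i in P) a i = a t.
Proof.
move=> Pt a_ge0 a_eq0; rewrite (esumID [set t]) // setIidr; last by move=> _ ->.
by rewrite esum_set1 ?a_ge0 // esum1 ?adde0 // => i [Pi /= /a_eq0]; apply.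
Qed.

Lemma finite_nat_ubound (M : set nat) :
  finite_set M -> exists b, forall k, M k -> (k <= b)%N.
Proof.
move=> finM; exists (\max_(k <- fset_set M) k)%N => k Mk.
by apply: leq_bigmax_seq => //; rewrite in_fset_set // inE.
Qed.

Lemma cvg0_finite_level_sets (R : realType) (u : R^nat) :
  (forall e, 0 < e -> finite_set [set n | e <= `|u n|]) -> u @ \oo --> 0.
Proof.
move=> fin_level; apply/cvgrPdist_lt => e e_gt0.
have [b ub] := finite_nat_ubound (fin_level e e_gt0).
exists b.+1 => // n /= lt_bn; rewrite sub0r normrN ltNge.
by apply/negP => /ub; rewrite leqNgt lt_bn.
Qed.

Lemma exists_fsubset_card (T : choiceType) (S : {fset T}) n :
  (n <= #|` S|)%N -> exists2 S' : {fset T}, (S' `<=` S)%fset & #|` S'| = n.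
Proof.
move=> le_nS; exists [fset x in take n S]%fset.
  by apply/fsubsetP => x; rewrite inE => /mem_take.
by rewrite card_fseq undup_id ?take_uniq ?fset_uniq // size_takel.
Qed.

Section c00.
Variable R : realType.

Lemma c00_0 : c00 (0 : nat -> R).
Proof.
by split=> //; apply: (sub_finite_set _ (finite_set0 nat)) => k /negP; apply.
Qed.

Lemma c00_unitv k : (0 < k)%N -> c00 (@unitv R k).
Proof.
move=> k_gt0; split; first by rewrite /unitv; case: k k_gt0.
apply: (sub_finite_set _ (finite_set1 k)) => j /=; rewrite /unitv.
by case: (eqVneq j k) => // _ /negP[].
Qed.

Lemma c00_scale_add (a : R) x y : c00 x -> c00 y -> c00 (a *: x + y).
Proof.
move=> [x0 x_fin] [y0 y_fin]; split; first by rewrite !fctE x0 y0 scaler0 addr0.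
have xy_fin : finite_set ([set k | x k != 0] `|` [set k | y k != 0]).
  by rewrite finite_setU.
apply: (sub_finite_set _ xy_fin) => k /=.
rewrite !fctE; case: (eqVneq (x k) 0) => [->|]; last by left.
by case: (eqVneq (y k) 0) => [->|]; [rewrite scaler0 addr0 => /negP[]|right].
Qed.

Definition comb (S : seq nat) (a : nat -> R) : nat -> R :=
  \sum_(k <- S) a k *: @unitv R k.

Lemma c00_comb S a : all (fun k => 0 < k)%N S -> c00 (comb S a).
Proof.
rewrite /comb; elim: S => [|k S IH] /= => [_|/andP[k_gt0 S_gt0]].
  by rewrite big_nil; exact: c00_0.
by rewrite big_cons; apply: c00_scale_add; [exact: c00_unitv|exact: IH].
Qed.

Lemma scale_unitv (a : R) k j : (a *: @unitv R k) j = if j == k then a else 0.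
Proof. by rewrite /unitv fctE; case: eqP => _; [exact: mulr1|exact: mulr0]. Qed.

Lemma comb_eval S a j : uniq S -> comb S a j = if j \in S then a j else 0.
Proof.
move=> S_uniq; rewrite /comb fct_sumE; case: ifP => jS.
  rewrite (bigD1_seq j) //= scale_unitv eqxx big1 ?addr0 // => k kj.
  by rewrite scale_unitv eq_sym (negbTE kj).
rewrite big1_seq // => k /andP[_ kS]; rewrite scale_unitv ifN //.
by apply: contraFN jS => /eqP ->.
Qed.

Variable f : (nat -> R) -> R.
Hypothesis f_linear :
  forall (a : R) x y, c00 x -> c00 y -> f (a *: x + y) = a * f x + f y.

Lemma linear_c00_0 : f 0 = 0.
Proof.
have := f_linear 1 c00_0 c00_0; rewrite scale1r addr0 mul1r => /eqP.
by rewrite -subr_eq subrr eq_sym => /eqP.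
Qed.

Lemma linear_comb S a : all (fun k => 0 < k)%N S ->
  f (comb S a) = \sum_(k <- S) a k * f (@unitv R k).
Proof.
rewrite /comb; elim: S => [|k S IH] /= => [_|/andP[k_gt0 S_gt0]].
  by rewrite !big_nil linear_c00_0.
rewrite !big_cons f_linear ?IH //; [exact: c00_unitv|exact: c00_comb].
Qed.

End c00.

Section supabs.
Variable R : realType.
Implicit Types (x : nat -> R) (A : cantor_space).

Lemma supabs_ge0 x A : (0 <= supabs x A)%E.
Proof. by apply: ereal_sup_ubound; right. Qed.

Lemma supabs_ge x A k : A k -> (`|x k|%:E <= supabs x A)%E.
Proof. by move=> Ak; apply: ereal_sup_ubound; left; exists k. Qed.

Lemma supabs_le x A c :
  0 <= c -> (forall k, A k -> `|x k| <= c) -> (supabs x A <= c%:E)%E.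
Proof.
move=> c_ge0 xc; apply: ge_ereal_sup => _ [[k Ak <-]|->]; rewrite ?lee_fin //.
exact: xc.
Qed.

Lemma supabs_eq0 x A : (forall k, A k -> x k = 0) -> supabs x A = 0%E.
Proof.
move=> x_eq0; apply: le_anti; rewrite supabs_ge0 andbT.
by apply: supabs_le => // k /x_eq0 ->; rewrite normr0.
Qed.

Lemma qnorm_ge_abs F x k : (0 < k)%N -> (`|x k|%:E <= qnorm F x)%E.
Proof.
move=> k_gt0; apply: le_ereal_inf_tmp => _ [P [[_ _ P_cover _] _] <-].
have [A PA Ak] := P_cover k k_gt0.
exact: le_trans (supabs_ge x Ak) (esum_ge_term (supabs x) PA).
Qed.

End supabs.

Definition block_partition (A : cantor_space) : set cantor_space :=
  [set B | B = empty_set_pt \/ B = A \/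
     exists2 k, (0 < k)%N /\ ~~ A k & B = singleton_pt k].

Lemma is_partition_block A : subset_omega A -> is_partition (block_partition A).
Proof.
move=> A0; split.
- by left.
- by move=> B [->|[->|[[|k] [] // _ _ ->]]].
- move=> k k_gt0; case Ak: (A k); first by exists A => //; right; left.
  exists (singleton_pt k); last by rewrite /singleton_pt eqxx.
  by right; right; exists k; rewrite ?Ak.
- move=> B C PB PC BC k; apply/negP => /andP[Bk Ck].
  move: PB PC BC Bk Ck => [->|[->|[j [_ Aj] ->]]] [->|[->|[j' [_ Aj'] ->]]] //=;
    rewrite /singleton_pt; try by move=> /(_ erefl).
  + by move=> _ Ak /eqP e; subst; rewrite Ak in Aj'.
  + by move=> _ /eqP e Ak; subst; rewrite Ak in Aj.
  + by move=> ne /eqP e /eqP e'; subst.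
Qed.

Section singleton_family.
Variables (R : realType) (F : set cantor_space).
Hypotheses (F_empty : F empty_set_pt)
  (F_singleton : forall k, (0 < k)%N -> F (singleton_pt k)).

Lemma block_partition_in A :
  F A -> subset_omega A -> partitions_in F (block_partition A).
Proof.
move=> FA A0; split; first exact: is_partition_block.
by move=> B [->|[->|[k [k_gt0 _] ->]]] //; apply: F_singleton.
Qed.

Lemma qnorm_le_supported A (x : nat -> R) c :
  F A -> subset_omega A -> 0 <= c ->
  (forall k, ~~ A k -> x k = 0) -> (forall k, `|x k| <= c) ->
  (qnorm F x <= c%:E)%E.
Proof.
move=> FA A0 c_ge0 x_supp x_le.
apply: ge_ereal_inf; exists (\esum_(B in block_partition A) supabs x B)%E.
  by exists (block_partition A); first exact: block_partition_in.
rewrite (esum_eq_term (t := A)); first exact: supabs_le.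
- by right; left.
- by move=> *; apply: supabs_ge0.
move=> B [->|[->|[k [_ Ak] ->]]] // _; apply: supabs_eq0 => j //.
by move=> /eqP ->; apply: x_supp.
Qed.

Lemma qnorm_comb_le (S : {fset nat}) (a : nat -> R) c :
  F (fun k => k \in S) -> ~~ (0%N \in S) -> 0 <= c ->
  (forall k, `|a k| <= c) -> (qnorm F (comb S a) <= c%:E)%E.
Proof.
move=> FS S0 c_ge0 a_le; apply: (qnorm_le_supported FS) => //.
  by move=> k /negbTE kS; rewrite comb_eval ?fset_uniq // kS.
by move=> k; rewrite comb_eval ?fset_uniq //; case: ifP; rewrite ?normr0.
Qed.

Lemma qnorm_unitv n : (0 < n)%N -> qnorm F (@unitv R n) = 1%E.
Proof.
move=> n_gt0; apply: le_anti; apply/andP; split.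
  apply: (@qnorm_le_supported (singleton_pt n)) => //.
  - exact: F_singleton.
  - by rewrite /subset_omega /singleton_pt; case: n n_gt0.
  - by move=> k; rewrite /singleton_pt /unitv => /negbTE ->.
  - by move=> k; rewrite /unitv; case: ifP; rewrite ?normr1 ?normr0.
by have := qnorm_ge_abs F (@unitv R n) n_gt0; rewrite /unitv eqxx normr1.
Qed.

End singleton_family.


Lemma large_fset F : large F ->
  forall M : set nat, ~ M 0%N -> infinite_set M -> forall n, (0 < n)%N ->
  exists2 S : {fset nat},
    F (fun k => k \in S) & [set` S] `<=` M /\ #|` S|%fset = n.
Proof.
move=> F_large M M0 M_inf n n_gt0.
have [A FA [AM An]] := F_large M M0 M_inf n n_gt0.
have A_fin : finite_set [set k | A k] by apply/finite_setP; exists n.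
have A_mem : A = (fun k => k \in fset_set [set k | A k]).
  by apply/funext => k; rewrite in_fset_set // mem_setE.
exists (fset_set [set k | A k]); first by rewrite -A_mem.
split; last exact: card_fset_set.
by move=> k /=; rewrite in_fset_set // mem_setE => /AM.
Qed.

Section large_family.
Variables (R : realType) (F : set cantor_space).
Hypotheses (F_empty : F empty_set_pt)
  (F_singleton : forall k, (0 < k)%N -> F (singleton_pt k))
  (F_large : large F).


Lemma large_values_finite (f : (nat -> R) -> R) e :
  cont_lin_functional F f -> 0 < e ->
  finite_set [set k | (0 < k)%N /\ e <= `|f (@unitv R k)|].
Proof.
move=> [f_lin f_cont] e_gt0; set M := [set k | _ /\ _].
have [d d_gt0 f_small] := f_cont 0 (c00_0 R) 1 ltr01.
apply: contrapT => M_inf.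
pose c := d / 2; have c_gt0 : 0 < c by rewrite divr_gt0.
pose N := Num.truncn (c * e)^-1.
have M0 : ~ M 0%N by case.
have [S FS [SM cardS]] := large_fset F_large M0 M_inf (ltn0Sn N).
have S_gt0 : all (fun k => 0 < k)%N S by apply/allP => k /SM [].
pose y := comb S (fun k => c * Num.sg (f (@unitv R k))).
have y_small : (qnorm F (y - 0)%R < d%:E)%E.
  have S0 : ~~ (0%N \in S) by apply/negP => /SM [].
  have a_le k : `|c * Num.sg (f (@unitv R k))| <= c.
    rewrite normrM gtr0_norm // normr_sg.
    by apply: ler_piMr; [exact: ltW|case: (_ != 0)].
  have y_le := qnorm_comb_le F_empty F_singleton FS S0 (ltW c_gt0) a_le.
  rewrite subr0 (le_lt_trans y_le) // lte_fin /c.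
  by rewrite ltr_pdivrMr // ltr_pMr // ltr1n.
have fy : f y = c * \sum_(k <- S) `|f (@unitv R k)|.
  rewrite linear_comb // mulr_sumr; apply: eq_bigr => k _.
  by rewrite -mulrA -normrEsg.
have fy_gt1 : 1 < f y.
  apply: lt_le_trans (_ : N.+1%:R * (c * e) <= _).
    by rewrite -ltr_pdivrMr ?mulr_gt0 // div1r truncnS_gt.
  rewrite fy -cardS card_fset_sum1 natr_sum !mulr_suml mulr_sumr.
  rewrite big_seq [leRHS]big_seq; apply: ler_sum => k /SM [_ ek].
  by rewrite mul1r ler_pM2l.
have := f_small y (c00_comb _ S_gt0) y_small.
by rewrite linear_c00_0 ?subr0 // ltNge (le_trans (ltW fy_gt1) (ler_norm _)).
Qed.

Lemma unitv_weakly_null : weakly_null F (fun n => @unitv R n.+1).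
Proof.
move=> f f_cont; apply: cvg0_finite_level_sets => e e_gt0.
have M_fin := large_values_finite f_cont e_gt0.
by apply: (sub_finite_set _ (finite_image predn M_fin)) => n /= en; exists n.+1.
Qed.

End large_family.

Lemma not_schur_unitv (R : realType) F :
  weakly_null F (fun n => @unitv R n.+1) ->
  (forall n, (0 < n)%N -> qnorm F (@unitv R n) = 1%E) -> not_schur R F.
Proof.
move=> e_wnull e_norm; exists (fun n => @unitv R n.+1).
  by move=> n; exact: c00_unitv.
split=> // /(_ 1 ltr01) [N _ /(_ N (leqnn N))].
by rewrite /= e_norm // ltxx.
Qed.

Lemma hereditary_cover_singleton F : hereditary F -> covers_omega F ->
  forall k, (0 < k)%N -> F (singleton_pt k).
Proof.
move=> F_her [F_cover _] k k_gt0; have [A FA Ak] := F_cover k k_gt0.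
by apply: F_her FA _ => j /eqP ->.
Qed.

Lemma hereditary_cover_empty F :
  hereditary F -> covers_omega F -> F empty_set_pt.
Proof.
move=> F_her F_cover.
by apply: F_her (hereditary_cover_singleton F_her F_cover (ltn0Sn 0)) _.
Qed.

Lemma schreier_singleton k : (0 < k)%N -> schreier (singleton_pt k).
Proof.
move=> k_gt0; right; exists k; split=> [|j /eqP -> //|].
  by rewrite /singleton_pt eqxx.
have -> : [set j | singleton_pt k j] = [set k].
  by apply/seteqP; split=> j; rewrite /= /singleton_pt; [move=> /eqP|move=> ->].
by rewrite (card_le_eql card_set1) card_le_II.
Qed.

Lemma schreier_large : large schreier.
Proof.
move=> M M0 M_inf n n_gt0.
have [B BM nB] := infinite_set_fset n (infinite_setD M_inf (finite_II n)).
have [S SB cardS] := exists_fsubset_card nB.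
have SM k : k \in S -> M k /\ (n <= k)%N.
  by move=> /(fsubsetP SB) /BM [Mk /negP nk]; rewrite leqNgt.
have S_card : ([set` S] #= `I_n)%card by apply/card_eq_fsetP.
have [m mS m_min] : exists2 m, m \in S & forall k, k \in S -> (m <= k)%N.
  have [x xS] : exists x, x \in S by apply/fset0Pn; rewrite -cardfs_gt0 cardS.
  by case: (ex_minnP (ex_intro _ x xS)) => m; exists m.
exists (fun k => k \in S); last by split=> // k /SM [].
right; exists m; split=> //.
by rewrite (card_le_eql S_card) card_le_II; have [] := SM m mS.
Qed.

Theorem mainTheorem14 (R : realType) :
  (forall F : set cantor_space,
     finite_family F -> compact_family F -> hereditary F ->
     covers_omega F -> large F ->
     [/\ weakly_null F (fun n => @unitv R n.+1),
         (forall n, (0 < n)%N -> qnorm F (@unitv R n) = 1%E) &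
         not_schur R F]) /\
  not_schur R schreier.
Proof.
split=> [F _ _ F_her F_cover F_large|].
  have F_empty := hereditary_cover_empty F_her F_cover.
  have F_singleton := hereditary_cover_singleton F_her F_cover.
  have e_wnull : weakly_null F (fun n => @unitv R n.+1).
    exact: unitv_weakly_null.
  have e_norm := qnorm_unitv R F_empty F_singleton.
  by split=> //; exact: not_schur_unitv.
have schreier_empty : schreier empty_set_pt by left.
apply: not_schur_unitv.
  exact: unitv_weakly_null schreier_empty schreier_singleton schreier_large.
exact: qnorm_unitv schreier_empty schreier_singleton.
Qed.
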